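(* Let $\Delta\in(0,1)$. (i) If $N\ge 8\gamma_{4k}^{-1}\ln(2/\Delta)+12k\ln(2R/\Delta)$ (with $\gamma_{4k}>0$), then with probability at least $1-\Delta$, $$1-\widehat\tau\ge\frac{C}{2}\left[1+\frac{1-\gamma_{4k}}{\gamma_{4k}}\bar C\right]^{-1}(1-\tau).$$ (ii) If $N\ge 3\gamma_{2k}^{-1}\ln(2/\Delta)+16k\ln(2R/\Delta)$ (with $\gamma_{2k}>0$), then with probability at least $1-\Delta$, $$1-\tau\ge\frac{C}{2}\left[1+\frac{1-\widehat\gamma_{4k}}{\widehat\gamma_{4k}}\bar C\right]^{-1}(1-\widehat\tau)$$ (where the right-hand side is read as $0$ if $\widehat\gamma_{4k}=0$).
   Context: Let $R\ge 2$ be an integer and $\rho=(\rho_1,\dots,\rho_R)$ a probability vector with $\rho_r>0$ for all $r$. Let $Y_1,\dots,Y_N$ be i.i.d. labels with $\mathbb P(Y_j=r)=\rho_r$, $N_r=|\{j:Y_j=r\}|$, $\widehat\rho_r=N_r/N$. Fix an integer $k\ge1$. Set $\tau:=1-\sum_{r}\rho_r(1-\rho_r)^k$ and $\widehat\tau:=1-\sum_r\widehat\rho_r(1-\widehat\rho_r)^k$. For $\alpha\ge1$ define $\gamma_\alpha:=\sum_{r:\rho_r\le 1/\alpha}\rho_r$ and $\widehat\gamma_\alpha:=\sum_{r:\widehat\rho_r\le1/\alpha}\widehat\rho_r$. Let $C:=\inf_{k'\ge1}\left(1-\frac{1}{2k'}\right)^{k'}$ and $\bar C:=\sup_{k'\ge1}\left(1-\frac{1}{4k'}\right)^{k'}$,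 the infimum/supremum over positive integers $k'$. *)

From HB Require Import structures.
From mathcomp Require Import all_boot all_order all_algebra.
From mathcomp Require Import all_classical all_reals exp.
Set Implicit Arguments. Unset Strict Implicit. Unset Printing Implicit Defensive.
Import Order.TTheory GRing.Theory Num.Theory.
Local Open Scope ring_scope.
Local Open Scope classical_set_scope.

Definition tauf {R : realType} {nR : nat} (k : nat) (p : 'I_nR -> R) : R :=
  1 - \sum_(r < nR) p r * (1 - p r) ^+ k.

Definition gammaf {R : realType} {nR : nat} (alpha : R) (p : 'I_nR -> R) : R :=
  \sum_(r < nR | p r <= alpha^-1) p r.

Definition count_lab {nR N : nat} (s : {ffun 'I_N -> 'I_nR}) (r : 'I_nR) : nat :=
  #|[set j | s j == r]|.

Definition rhohat {R : realType} {nR N : nat} (s : {ffun 'I_N -> 'I_nR}) :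
  'I_nR -> R := fun r => (count_lab s r)%:R / N%:R.

Definition iid_prob {R : realType} {nR : nat} (N : nat) (rho : 'I_nR -> R)
  (E : {ffun 'I_N -> 'I_nR} -> Prop) : R :=
  \sum_(s : {ffun 'I_N -> 'I_nR} | `[< E s >]) \prod_(j < N) rho (s j).

Definition Cconst (R : realType) : R :=
  inf [set (1 - (2 * k'%:R)^-1) ^+ k' | k' in [set k' : nat | (0 < k')%N]].
Definition Cbar (R : realType) : R :=
  sup [set (1 - (4 * k'%:R)^-1) ^+ k' | k' in [set k' : nat | (0 < k')%N]].
Arguments iid_prob {R nR} N rho E.

From HB Require Import structures.
From mathcomp Require Import all_boot all_order all_algebra.
From mathcomp Require Import all_classical all_reals exp sequences.
From mathcomp Require Import ring lra.
Import Order.TTheory GRing.Theory Num.Theory.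
Local Open Scope ring_scope.

(* Write S(p) := 1 - tauf k p = \sum_r p_r (1 - p_r)^k.  Cutting the sum at the
   threshold 1/(4k) gives S(p) <= g + (1 - g) Cbar with g = gammaf (4k) p, so the
   right-hand side of both bounds is at most (C/2) g; conversely S(p) is at least C
   times the p-mass of the labels with p_r <= 1/(2k).  Part (i) thus follows once the
   empirical distribution puts mass >= g/2 on {rho_r <= 1/(4k)} while none of these
   labels gets frequency above 1/(2k); part (ii) once it puts mass <= 2 gammaf (2k) rho
   on {rho_r <= 1/(2k)} while every other label keeps frequency above 1/(4k).  Each of
   these events fails with probability at most Delta/2, resp. Delta/(2 nR) per label, by
   multiplicative Chernoff bounds: the moment generating function of a count is taken
   at t = +-ln 2, and 2/3 <= ln 2 <= 3/4 supplies the constants 1/3 and 1/8. *)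

Section Ln2.
Context {R : realType}.

Lemma expR_le_sqr (x c d : R) : expR (x / 2) <= c -> c ^+ 2 <= d -> expR x <= d.
Proof.
move=> hc; apply: le_trans; rewrite -[x in expR x](divfK (x := 2)) ?pnatr_eq0 //.
by rewrite expRM_natr lerXn2r ?nnegrE ?expR_ge0 // (le_trans (expR_ge0 _) hc).
Qed.

Lemma expR_ge_sqr (x c d : R) : 0 <= c -> c <= expR (x / 2) -> d <= c ^+ 2 -> d <= expR x.
Proof.
move=> c0 hc /le_trans; apply; rewrite -[x in expR x](divfK (x := 2)) ?pnatr_eq0 //.
by rewrite expRM_natr lerXn2r ?nnegrE ?expR_ge0.
Qed.

Lemma ln2_ge : 2 / 3 <= ln (2 : R).
Proof.
rewrite -ler_expR lnK ?posrE //.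
apply: (@expR_le_sqr _ (1407 / 1000)); last by rewrite expr2; lra.
apply: (@expR_le_sqr _ (1186 / 1000)); last by rewrite expr2; lra.
apply: (@expR_le_sqr _ (1089 / 1000)); last by rewrite expr2; lra.
apply: (@expR_le_sqr _ (24 / 23)); last by rewrite expr2; lra.
have -> : 2 / 3 / 2 / 2 / 2 / 2 = 1 / 24 :> R by lra.
have := expR_ge1Dx (- (1 / 24) : R); rewrite expRN.
have := expR_gt0 (1 / 24 : R); set e := expR _ => e0.
rewrite -(ler_pM2r e0) mulVf ?gt_eqF //; lra.
Qed.

Lemma ln2_le : ln (2 : R) <= 3 / 4.
Proof.
rewrite -ler_expR lnK ?posrE //.
apply: (@expR_ge_sqr _ (143 / 100)); [lra | | by rewrite expr2; lra].
apply: (@expR_ge_sqr _ (1196 / 1000)); [lra | | by rewrite expr2; lra].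
apply: (@expR_ge_sqr _ (35 / 32)); [lra | | by rewrite expr2; lra].
by apply: le_trans (expR_ge1Dx _); lra.
Qed.

End Ln2.

Lemma ler_sum_nneg_subset {R : numDomainType} (I : finType) (P Q : pred I) (F : I -> R) :
  (forall i, 0 <= F i) -> (forall i, P i -> Q i) ->
  \sum_(i | P i) F i <= \sum_(i | Q i) F i.
Proof.
move=> F0 PQ; rewrite [leLHS]big_mkcond [leRHS]big_mkcond ler_sum // => i _.
by case: ifP => [/PQ -> //|_]; case: ifP.
Qed.

Section Distribution.
Context {R : realType} {n : nat} {p : 'I_n -> R}.
Hypotheses (p_ge0 : forall r, 0 <= p r) (p_sum1 : \sum_r p r = 1).

Lemma mass_le1 (A : pred 'I_n) : \sum_(r | A r) p r <= 1.
Proof. by rewrite -p_sum1 ler_sum_nneg_subset. Qed.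

Lemma prob_le1 r : p r <= 1.
Proof. by have := mass_le1 (pred1 r); rewrite big_pred1_eq. Qed.

Lemma tauf_complE k : 1 - tauf k p = \sum_r p r * (1 - p r) ^+ k.
Proof. by rewrite /tauf opprB addrC subrK. Qed.

Lemma tauf_compl_ge0 k : 0 <= 1 - tauf k p.
Proof.
by rewrite tauf_complE sumr_ge0 // => r _; rewrite mulr_ge0 ?exprn_ge0 ?subr_ge0 ?prob_le1.
Qed.

Lemma mass_le_tauf_compl k (A : pred 'I_n) (a : R) :
  a <= 1 -> (forall r, A r -> p r <= a) ->
  (1 - a) ^+ k * \sum_(r | A r) p r <= 1 - tauf k p.
Proof.
move=> a1 hA; rewrite tauf_complE [leRHS](bigID A) /= mulr_sumr -[leLHS]addr0.
apply: lerD; last first.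
  by rewrite sumr_ge0 // => r _; rewrite mulr_ge0 ?exprn_ge0 ?subr_ge0 ?prob_le1.
apply: ler_sum => r Ar; rewrite mulrC ler_wpM2l // lerXn2r ?nnegrE ?subr_ge0 ?prob_le1 //.
by rewrite lerD2l lerN2 hA.
Qed.

Lemma tauf_compl_le_gammaf k (a : R) :
  1 <= a -> 1 - tauf k p <= gammaf a p + (1 - gammaf a p) * (1 - a^-1) ^+ k.
Proof.
move=> a1; have ia1 : a^-1 <= 1 by rewrite invf_le1 // (lt_le_trans ltr01).
have -> : 1 - gammaf a p = \sum_(r | ~~ (p r <= a^-1)) p r.
  rewrite /gammaf -[X in X - _ = _]p_sum1 (bigID (fun r => p r <= a^-1)) /=.
  by rewrite addrAC subrr add0r.
rewrite tauf_complE (bigID (fun r => p r <= a^-1)) /= mulr_suml.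
apply: lerD; apply: ler_sum => r hr.
  by rewrite -[leRHS]mulr1 ler_wpM2l // exprn_ile1 ?subr_ge0 ?prob_le1 // gerBl.
rewrite ler_wpM2l // lerXn2r ?nnegrE ?subr_ge0 ?prob_le1 //.
by rewrite lerD2l lerN2 ltW // ltNge.
Qed.

End Distribution.

Definition hits {nR N : nat} (A : pred 'I_nR) (s : {ffun 'I_N -> 'I_nR}) : nat :=
  #|[set j | A (s j)]|.

Section IidSampling.
Context {R : realType} {nR N : nat} {rho : 'I_nR -> R}.
Hypotheses (rho_ge0 : forall r, 0 <= rho r) (rho_sum1 : \sum_r rho r = 1).

Local Notation sample := {ffun 'I_N -> 'I_nR}.
Local Notation weight s := (\prod_(j < N) rho (s j)).
Local Notation Pr := (iid_prob N rho).

Lemma sum_sample_prod (F : 'I_nR -> R) :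
  \sum_(s : sample) \prod_(j < N) F (s j) = (\sum_r F r) ^+ N.
Proof. by rewrite -(bigA_distr_bigA (fun _ => F)) prodr_const card_ord. Qed.

Lemma iid_probE (E : sample -> Prop) : Pr E = \sum_(s : sample) weight s * (`[< E s >])%:R.
Proof.
rewrite /iid_prob big_mkcond; apply: eq_bigr => s _.
by case: ifP => _; rewrite ?mulr1 ?mulr0.
Qed.

Lemma iid_prob_compl (E : sample -> Prop) : Pr E + Pr (fun s => ~ E s) = 1.
Proof.
transitivity (\sum_(s : sample) weight s); last by rewrite sum_sample_prod rho_sum1 expr1n.
rewrite !iid_probE -big_split /=; apply: eq_bigr => s _; rewrite -mulrDr.
by case: asboolP => e; case: asboolP => ne; rewrite ?addr0 ?add0r ?mulr1 //; tauto.
Qed.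

Lemma iid_prob_le_expect (E : sample -> Prop) (g : sample -> R) :
  (forall s, 0 <= g s) -> (forall s, E s -> 1 <= g s) ->
  Pr E <= \sum_(s : sample) weight s * g s.
Proof.
move=> g0 gE; rewrite iid_probE; apply: ler_sum => s _.
by rewrite ler_wpM2l ?prodr_ge0 //; case: asboolP => [/gE|].
Qed.

Lemma iid_prob_union_bound (E G : sample -> Prop) (P : pred 'I_nR)
    (F : 'I_nR -> sample -> Prop) :
  (forall s, E s -> G s \/ exists2 r, P r & F r s) ->
  Pr E <= Pr G + \sum_(r | P r) Pr (F r).
Proof.
move=> cover; rewrite !iid_probE.
under [X in _ <= _ + X]eq_bigr do rewrite iid_probE.
rewrite exchange_big -big_split /=; apply: ler_sum => s _.
rewrite -mulr_sumr -mulrDr ler_wpM2l ?prodr_ge0 //.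
have F0 : 0 <= \sum_(r | P r) (`[< F r s >])%:R :> R by rewrite sumr_ge0.
case: asboolP => [/cover [Gs|[r Pr_r Frs]]|_]; last by rewrite addr_ge0.
  by case: asboolP => // _; rewrite /= mulr1n lerDl.
rewrite (bigD1 r) //=; case: (asboolP (F r s)) => // _.
by rewrite mulr1n addrCA lerDl addr_ge0 ?ler0n ?sumr_ge0.
Qed.

Lemma iid_prob_ge_of_cover (Delta : R) (E G : sample -> Prop) (P : pred 'I_nR)
    (F : 'I_nR -> sample -> Prop) :
  (0 < nR)%N -> 0 <= Delta -> Pr G <= Delta / 2 ->
  (forall r, P r -> Pr (F r) <= Delta / (2 * nR%:R)) ->
  (forall s, ~ G s -> (forall r, P r -> ~ F r s) -> E s) ->
  1 - Delta <= Pr E.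
Proof.
move=> nR0 Delta0 PG PF good.
have nRpos : 0 < nR%:R :> R by rewrite ltr0n.
suff : Pr (fun s => ~ E s) <= Delta by have := iid_prob_compl E; lra.
apply: le_trans (@iid_prob_union_bound _ G P F _) _.
  move=> s nEs; case: (pselect (G s)) => [|nGs]; first by left.
  case: (pselect (exists2 r, P r & F r s)) => [|nF]; first by right.
  by exfalso; apply/nEs/good => // r Pr_r Frs; apply: nF; exists r.
have : \sum_(r | P r) Pr (F r) <= \sum_(r < nR) Delta / (2 * nR%:R).
  apply: le_trans (ler_sum _ PF) _.
  by apply: ler_sum_nneg_subset => // r; rewrite divr_ge0 ?mulr_ge0.
rewrite sumr_const card_ord -[_ *+ nR]mulr_natr.
have -> : Delta / (2 * nR%:R) * nR%:R = Delta / 2 by field; rewrite gt_eqF.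
lra.
Qed.

Lemma hitsE (A : pred 'I_nR) (s : sample) : (hits A s)%:R = \sum_(j < N) (A (s j))%:R :> R.
Proof.
rewrite /hits -sum1_card natr_sum big_mkcond; apply: eq_bigr => j _.
by rewrite inE; case: (A (s j)).
Qed.

Lemma sum_weight_expR_hits (A : pred 'I_nR) (t : R) :
  \sum_(s : sample) weight s * expR (t * (hits A s)%:R)
    = (1 + (\sum_(r | A r) rho r) * (expR t - 1)) ^+ N.
Proof.
transitivity (\sum_(s : sample) \prod_(j < N) (rho (s j) * expR (t * (A (s j))%:R))).
  by apply: eq_bigr => s _; rewrite hitsE mulr_sumr expR_sum big_split.
rewrite (sum_sample_prod (fun r => rho r * expR (t * (A r)%:R))); congr (_ ^+ _).
rewrite -[X in _ = X + _]rho_sum1 mulr_suml [X in _ + X]big_mkcond -big_split /=.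
apply: eq_bigr => r _.
by case: (A r); rewrite /= ?mulr1n ?mulr0n ?mulr0 ?expR0 ?mulr1 ?addr0 //; ring.
Qed.

Lemma iid_prob_le_mgf_hits (A : pred 'I_nR) (t c : R) (E : sample -> Prop) :
  (forall s, E s -> c <= t * (hits A s)%:R) ->
  Pr E <= expR (N%:R * (\sum_(r | A r) rho r) * (expR t - 1) - c).
Proof.
move=> hE; set m := \sum_(r | A r) rho r.
apply: le_trans (iid_prob_le_expect _ (fun s => expR (t * (hits A s)%:R - c)) _ _) _.
- by move=> s; apply: expR_ge0.
- by move=> s /hE hc; apply: le_trans (expR_ge1Dx _); rewrite lerDl subr_ge0.
under eq_bigr do rewrite expRD mulrA.
rewrite -mulr_suml sum_weight_expR_hits -/m expRD ler_wpM2r ?expR_ge0 //.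
rewrite -mulrA expRM_natl lerXn2r ?nnegrE ?expR_ge0 ?expR_ge1Dx //.
have m1 : m <= 1 := mass_le1 rho_ge0 rho_sum1 A.
have m0 : 0 <= m by rewrite sumr_ge0.
by rewrite mulrBr mulr1; have := mulr_ge0 m0 (expR_ge0 t); lra.
Qed.

Lemma chernoff_hits_ge (A : pred 'I_nR) (m : R) :
  0 <= m -> N%:R * (\sum_(r | A r) rho r) <= m ->
  Pr (fun s => 2 * m <= (hits A s)%:R) <= expR (- (m / 3)).
Proof.
move=> m0 hm; have l2 : 2 / 3 <= ln (2 : R) := ln2_ge.
apply: le_trans (iid_prob_le_mgf_hits A (ln 2) (ln 2 * (2 * m)) _ _) _.
  by move=> s hs; rewrite ler_wpM2l //; lra.
rewrite lnK ?posrE // ler_expR.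
have : 2 / 3 * m <= ln 2 * m by rewrite ler_wpM2r.
lra.
Qed.

Lemma chernoff_hits_le (A : pred 'I_nR) :
  Pr (fun s => (hits A s)%:R <= N%:R * (\sum_(r | A r) rho r) / 2)
    <= expR (- (N%:R * (\sum_(r | A r) rho r) / 8)).
Proof.
set mu := N%:R * _; have l2 : ln (2 : R) <= 3 / 4 := ln2_le.
have mu0 : 0 <= mu by rewrite mulr_ge0 ?sumr_ge0.
apply: le_trans (iid_prob_le_mgf_hits A (- ln 2) (- ln 2 * (mu / 2)) _ _) _.
  by move=> s hs; rewrite !mulNr lerN2 ler_wpM2l // ln_ge0 ?ler1n.
rewrite expRN lnK ?posrE // ler_expR -/mu.
have : ln 2 * mu <= 3 / 4 * mu by rewrite ler_wpM2r.
lra.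
Qed.

End IidSampling.

Section Empirical.
Context {R : realType} {nR N : nat} (s : {ffun 'I_N -> 'I_nR}).

(* In [count_lab] the set-builder is a classical set, read as a predicate through [`[< _ >]]. *)
Lemma count_lab_hits r : count_lab s r = hits (pred1 r) s.
Proof. by apply: eq_card => j; rewrite !inE; apply/idP/idP => [/set_mem|/mem_set]. Qed.

Lemma sum_count_lab (A : pred 'I_nR) : \sum_(r | A r) count_lab s r = hits A s.
Proof.
rewrite /hits -sum1_card (partition_big s A) /=; last by move=> j; rewrite inE.
apply: eq_bigr => r Ar; rewrite count_lab_hits sum1dep_card; apply: eq_card => j.
by rewrite !inE; case: eqP => [->|]; rewrite ?Ar ?andbF.
Qed.

Lemma sum_rhohat (A : pred 'I_nR) :
  \sum_(r | A r) @rhohat R _ _ s r = (hits A s)%:R / N%:R.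
Proof. by rewrite -mulr_suml -natr_sum sum_count_lab. Qed.

Lemma rhohatE r : @rhohat R _ _ s r = (hits (pred1 r) s)%:R / N%:R.
Proof. by rewrite /rhohat count_lab_hits. Qed.

Lemma rhohat_ge0 r : 0 <= @rhohat R _ _ s r.
Proof. by rewrite divr_ge0 ?ler0n. Qed.

Lemma rhohat_sum1 : (0 < N)%N -> \sum_r @rhohat R _ _ s r = 1.
Proof.
move=> N0; rewrite (sum_rhohat predT) /hits.
by rewrite cardsT card_ord divff // pnatr_eq0 -lt0n.
Qed.

End Empirical.

Section Constants.
Context {R : realType}.

Lemma exp_onem_inv_itv (c k : nat) :
  (0 < c)%N -> (0 < k)%N -> 0 <= (1 - (c%:R * k%:R)^-1 : R) ^+ k <= 1.
Proof.
move=> c0 k0; have ck1 : 1 <= c%:R * k%:R :> R by rewrite -natrM ler1n muln_gt0 c0.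
have ck0 : 0 < c%:R * k%:R :> R := lt_le_trans ltr01 ck1.
have i1 : (c%:R * k%:R)^-1 <= 1 :> R by rewrite invf_le1.
have i0 : 0 <= (c%:R * k%:R)^-1 :> R by rewrite invr_ge0 ltW.
by rewrite exprn_ge0 ?exprn_ile1 //; lra.
Qed.

Lemma Cconst_ge0 : 0 <= Cconst R.
Proof.
apply: lb_le_inf => [|_ [k' /= k0 <-]]; first by exists ((1 - (2 * 1%:R)^-1) ^+ 1), 1%N.
by case/andP: (@exp_onem_inv_itv 2 k' isT k0).
Qed.

Lemma Cconst_le_exp k : (0 < k)%N -> Cconst R <= (1 - (2 * k%:R)^-1) ^+ k.
Proof.
move=> k0; apply: ge_inf; last by exists k.
exists 0 => _ [k' /= k'0 <-].
by case/andP: (@exp_onem_inv_itv 2 k' isT k'0).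
Qed.

Lemma exp_le_Cbar k : (0 < k)%N -> (1 - (4 * k%:R)^-1) ^+ k <= Cbar R.
Proof.
move=> k0; apply: ub_le_sup; last by exists k.
exists 1 => _ [k' /= k'0 <-].
by case/andP: (@exp_onem_inv_itv 4 k' isT k'0).
Qed.

Lemma Cbar_ge0 : 0 <= Cbar R.
Proof.
apply: le_trans (@exp_le_Cbar 1 isT).
by case/andP: (@exp_onem_inv_itv 4 1 isT isT).
Qed.

End Constants.

Definition transfer_bound {R : realType} {n : nat} (k : nat) (p : 'I_n -> R) : R :=
  Cconst R / 2
    * (1 + (1 - gammaf (4 * k%:R) p) / gammaf (4 * k%:R) p * Cbar R)^-1
    * (1 - tauf k p).

Section Transfer.
Context {R : realType} {n k : nat}.
Hypothesis k_gt0 : (0 < k)%N.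

Lemma transfer_bound_le_gammaf (p : 'I_n -> R) :
  (forall r, 0 <= p r) -> \sum_r p r = 1 -> 0 < gammaf (4 * k%:R) p ->
  transfer_bound k p <= Cconst R / 2 * gammaf (4 * k%:R) p.
Proof.
move=> p0 p1 g0; set g := gammaf _ p.
have g1 : g <= 1 := mass_le1 p0 p1 _.
have hS : 1 - tauf k p <= g + (1 - g) * Cbar R.
  have k4 : 1 <= 4 * k%:R :> R by rewrite -natrM ler1n muln_gt0.
  apply: le_trans (tauf_compl_le_gammaf p0 p1 k _ k4) _.
  by rewrite lerD2l ler_wpM2l ?subr_ge0 ?exp_le_Cbar.
have D0 : 0 < g + (1 - g) * Cbar R by rewrite ltr_pwDl // mulr_ge0 ?subr_ge0 ?Cbar_ge0.
rewrite /transfer_bound -/g.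
have -> : 1 + (1 - g) / g * Cbar R = (g + (1 - g) * Cbar R) / g by field; rewrite gt_eqF.
rewrite -mulrA ler_wpM2l ?divr_ge0 ?Cconst_ge0 // invf_div.
by rewrite mulrAC ler_pdivrMr // ler_pM2l.
Qed.

Lemma Cconst_mass_le_tauf_compl (p : 'I_n -> R) (A : pred 'I_n) :
  (forall r, 0 <= p r) -> \sum_r p r = 1 -> (forall r, A r -> p r <= (2 * k%:R)^-1) ->
  Cconst R * \sum_(r | A r) p r <= 1 - tauf k p.
Proof.
move=> p0 p1 hA; have a1 : (2 * k%:R)^-1 <= 1 :> R.
  by rewrite invf_le1 -natrM ?ltr0n ?ler1n muln_gt0.
apply: le_trans (mass_le_tauf_compl p0 p1 k _ _ a1 hA).
by rewrite ler_wpM2r ?sumr_ge0 ?Cconst_le_exp.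
Qed.

Lemma transfer_bound_le_tauf_compl (p q : 'I_n -> R) :
  (forall r, 0 <= p r) -> \sum_r p r = 1 ->
  (forall r, 0 <= q r) -> \sum_r q r = 1 ->
  0 < gammaf (4 * k%:R) p ->
  gammaf (4 * k%:R) p / 2 <= \sum_(r | p r <= (4 * k%:R)^-1) q r ->
  (forall r, p r <= (4 * k%:R)^-1 -> q r <= (2 * k%:R)^-1) ->
  transfer_bound k p <= 1 - tauf k q.
Proof.
move=> p0 p1 q0 q1 g0 hmass hq.
apply: le_trans (transfer_bound_le_gammaf _ p0 p1 g0) _.
apply: le_trans (Cconst_mass_le_tauf_compl _ (fun r => p r <= _) q0 q1 hq).
by rewrite -mulrA [_^-1 * _]mulrC ler_wpM2l ?Cconst_ge0.
Qed.

Lemma guarded_transfer_bound_le_tauf_compl (p q : 'I_n -> R) :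
  (forall r, 0 <= p r) -> \sum_r p r = 1 ->
  (forall r, 0 <= q r) -> \sum_r q r = 1 ->
  \sum_(r | p r <= (2 * k%:R)^-1) q r <= 2 * gammaf (2 * k%:R) p ->
  (forall r, q r <= (4 * k%:R)^-1 -> p r <= (2 * k%:R)^-1) ->
  (if gammaf (4 * k%:R) q == 0 then 0 else transfer_bound k q) <= 1 - tauf k p.
Proof.
move=> p0 p1 q0 q1 hmass hq; case: eqP => [_|gq_neq0]; first exact: tauf_compl_ge0.
have gq0 : 0 < gammaf (4 * k%:R) q by rewrite lt_def sumr_ge0 ?andbT //; apply/eqP.
apply: le_trans (transfer_bound_le_gammaf _ q0 q1 gq0) _.
apply: le_trans (Cconst_mass_le_tauf_compl _ (fun r => p r <= _) p0 p1 (fun r h => h)).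
have hsub : gammaf (4 * k%:R) q <= \sum_(r | p r <= (2 * k%:R)^-1) q r.
  exact: ler_sum_nneg_subset.
rewrite -mulrA ler_wpM2l ?Cconst_ge0 //; rewrite /gammaf in hmass hsub *; lra.
Qed.

End Transfer.

Lemma expRN_le_of_ln {R : realType} (a y : R) : 0 < a -> ln a^-1 <= y -> expR (- y) <= a.
Proof. by move=> a0 hy; rewrite -[X in _ <= X](lnK a0) ler_expR lerNl -lnV. Qed.

Lemma sample_size_split {R : realType} {a b g x y z : R} :
  0 < a -> 0 < b -> 0 < g -> 0 <= x -> 0 <= y ->
  a * g^-1 * x + b * y <= z -> x <= z * g / a /\ y <= z / b.
Proof.
move=> a0 b0 g0 x0 y0 h.
have t1 : 0 <= a * g^-1 * x by rewrite mulr_ge0 // mulr_ge0 ?invr_ge0 ?ltW.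
have t2 : 0 <= b * y by rewrite mulr_ge0 // ltW.
split; rewrite ler_pdivlMr //; last by rewrite mulrC; lra.
have -> : x * a = a * g^-1 * x * g by field; rewrite gt_eqF.
by apply: ler_wpM2r; [exact: ltW | lra].
Qed.

Section Concentration.
Context {R : realType} {nR : nat} (rho : 'I_nR -> R) (k N : nat) (Delta : R).
Hypotheses (nR_ge2 : (2 <= nR)%N) (rho_gt0 : forall r, 0 < rho r)
  (rho_sum1 : \sum_r rho r = 1) (k_gt0 : (0 < k)%N) (Delta_itv : 0 < Delta < 1).

Let rho_ge0 r : 0 <= rho r := ltW (rho_gt0 r).

Let nR_gt0 : 0 < nR%:R :> R.
Proof. by rewrite ltr0n ltnW. Qed.

Let k_posR : 0 < k%:R :> R.
Proof. by rewrite ltr0n. Qed.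

Let Delta_gt0 : 0 < Delta.
Proof. by case/andP: Delta_itv. Qed.

Let ln_half_gt0 : 0 < ln (2 / Delta).
Proof. by case/andP: Delta_itv => D0 D1; rewrite ln_gt0 // ltr_pdivlMr //; lra. Qed.

Let ln_split_gt0 : 0 < ln (2 * nR%:R / Delta).
Proof.
have nR2 : 2 <= nR%:R :> R by rewrite ler_nat.
by case/andP: Delta_itv => D0 D1; rewrite ln_gt0 // ltr_pdivlMr //; lra.
Qed.

Let fail_half y : ln (2 / Delta) <= y -> expR (- y) <= Delta / 2.
Proof. by move=> hy; apply: expRN_le_of_ln; rewrite ?invf_div // divr_gt0. Qed.

Let fail_split y : ln (2 * nR%:R / Delta) <= y -> expR (- y) <= Delta / (2 * nR%:R).
Proof. by move=> hy; apply: expRN_le_of_ln; rewrite ?invf_div // divr_gt0 ?mulr_gt0. Qed.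

Let N_gt0 c : 0 < c -> ln (2 * nR%:R / Delta) <= N%:R / c -> (0 < N)%N.
Proof.
move=> c0 /(lt_le_trans ln_split_gt0); rewrite pmulr_lgt0 ?invr_gt0 //.
by rewrite ltr0n.
Qed.

Lemma transfer_bound_le_tauf_rhohat_whp :
  0 < gammaf (4 * k%:R) rho ->
  8 * (gammaf (4 * k%:R) rho)^-1 * ln (2 / Delta)
    + 12 * k%:R * ln (2 * nR%:R / Delta) <= N%:R ->
  1 - Delta <= iid_prob N rho (fun s => transfer_bound k rho <= 1 - tauf k (@rhohat R _ _ s)).
Proof.
move=> g0; set g := gammaf _ rho => HN.
have [hg hN] := sample_size_split (ltr0Sn R 7) (mulr_gt0 (ltr0Sn R 11) k_posR) g0
  (ltW ln_half_gt0) (ltW ln_split_gt0) HN.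
have N0 := N_gt0 _ (mulr_gt0 (ltr0Sn R 11) k_posR) hN.
have NR0 : 0 < N%:R :> R by rewrite ltr0n.
pose A : pred 'I_nR := fun r => rho r <= (4 * k%:R)^-1.
apply: (iid_prob_ge_of_cover rho_ge0 rho_sum1 _ _
  (fun s => (hits A s)%:R <= N%:R * g / 2) A
  (fun r s => 2 * (N%:R / (4 * k%:R)) <= (hits (pred1 r) s)%:R)).
- exact: ltnW.
- exact: ltW.
- by apply: le_trans (chernoff_hits_le rho_ge0 rho_sum1 A) _; apply: fail_half.
- move=> r Ar; apply: le_trans (chernoff_hits_ge rho_ge0 rho_sum1 (pred1 r) _ _ _) _.
  + by rewrite divr_ge0 ?mulr_ge0 ?ler0n.
  + by rewrite big_pred1_eq ler_wpM2l.
  have -> : N%:R / (4 * k%:R) / 3 = N%:R / (12 * k%:R) :> R by field; rewrite gt_eqF.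
  exact: fail_split.
move=> s nG nF; apply: (transfer_bound_le_tauf_compl k_gt0) => //.
- exact: rhohat_ge0.
- exact: rhohat_sum1.
- have : N%:R * g / 2 < (hits A s)%:R by rewrite ltNge; apply/negP.
  rewrite sum_rhohat ler_pdivlMr // -/g => /ltW; apply: le_trans.
  by rewrite [leLHS]mulrC mulrA.
move=> r Ar; rewrite rhohatE ler_pdivrMr //.
have -> : (2 * k%:R)^-1 * N%:R = 2 * (N%:R / (4 * k%:R)) :> R by field; rewrite gt_eqF.
by apply/ltW; rewrite ltNge; apply/negP; apply: nF.
Qed.

Lemma transfer_bound_rhohat_le_tauf_whp :
  0 < gammaf (2 * k%:R) rho ->
  3 * (gammaf (2 * k%:R) rho)^-1 * ln (2 / Delta)
    + 16 * k%:R * ln (2 * nR%:R / Delta) <= N%:R ->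
  1 - Delta <= iid_prob N rho (fun s =>
    (if gammaf (4 * k%:R) (@rhohat R _ _ s) == 0 then 0
     else transfer_bound k (@rhohat R _ _ s)) <= 1 - tauf k rho).
Proof.
move=> g0; set g := gammaf _ rho => HN.
have [hg hN] := sample_size_split (ltr0Sn R 2) (mulr_gt0 (ltr0Sn R 15) k_posR) g0
  (ltW ln_half_gt0) (ltW ln_split_gt0) HN.
have N0 := N_gt0 _ (mulr_gt0 (ltr0Sn R 15) k_posR) hN.
have NR0 : 0 < N%:R :> R by rewrite ltr0n.
pose B : pred 'I_nR := fun r => rho r <= (2 * k%:R)^-1.
apply: (iid_prob_ge_of_cover rho_ge0 rho_sum1 _ _
  (fun s => 2 * (N%:R * g) <= (hits B s)%:R) (fun r => ~~ B r)
  (fun r s => (hits (pred1 r) s)%:R <= N%:R * (\sum_(i | pred1 r i) rho i) / 2)).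
- exact: ltnW.
- exact: ltW.
- apply: le_trans (chernoff_hits_ge rho_ge0 rho_sum1 B _ _ (lexx _)) _.
    by rewrite mulr_ge0 ?ler0n ?ltW.
  exact: fail_half.
- move=> r nBr; apply: le_trans (chernoff_hits_le rho_ge0 rho_sum1 (pred1 r)) _.
  apply: fail_split; apply: le_trans hN _; rewrite big_pred1_eq.
  have -> : N%:R / (16 * k%:R) = N%:R * (2 * k%:R)^-1 / 8 :> R by field; rewrite gt_eqF.
  by rewrite ler_pM2r ?invr_gt0 // ler_pM2l //; apply: ltW; rewrite ltNge.
move=> s nG nF; apply: (guarded_transfer_bound_le_tauf_compl k_gt0) => //.
- exact: rhohat_ge0.
- exact: rhohat_sum1.
- have : (hits B s)%:R < 2 * (N%:R * g) by rewrite ltNge; apply/negP.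
  rewrite sum_rhohat ler_pdivrMr // -/g => /ltW /le_trans; apply.
  by rewrite [N%:R * g]mulrC mulrA.
move=> r; apply: contraTT => nBr; rewrite -ltNge rhohatE ltr_pdivlMr //.
have : N%:R * rho r / 2 < (hits (pred1 r) s)%:R.
  by rewrite ltNge; apply/negP; move: (nF r nBr); rewrite big_pred1_eq.
apply: le_lt_trans.
have -> : (4 * k%:R)^-1 * N%:R = N%:R * (2 * k%:R)^-1 / 2 :> R by field; rewrite gt_eqF.
by rewrite ler_pM2r ?invr_gt0 // ler_pM2l //; apply: ltW; rewrite ltNge.
Qed.

End Concentration.

Theorem mainTheorem2 (R : realType) (nR : nat) (rho : 'I_nR -> R)
  (k N : nat) (Delta : R) :
  (2 <= nR)%N ->
  (forall r, 0 < rho r) ->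
  \sum_(r < nR) rho r = 1 ->
  (1 <= k)%N ->
  0 < Delta < 1 ->
  (* (i) *)
  (0 < gammaf (4 * k%:R) rho ->
   8 * (gammaf (4 * k%:R) rho)^-1 * ln (2 / Delta)
     + 12 * k%:R * ln (2 * nR%:R / Delta) <= N%:R ->
   1 - Delta <= iid_prob N rho (fun s =>
     Cconst R / 2
       * (1 + (1 - gammaf (4 * k%:R) rho) / gammaf (4 * k%:R) rho * Cbar R)^-1
       * (1 - tauf k rho)
     <= 1 - tauf k (@rhohat R _ _ s)))
  /\
  (* (ii) *)
  (0 < gammaf (2 * k%:R) rho ->
   3 * (gammaf (2 * k%:R) rho)^-1 * ln (2 / Delta)
     + 16 * k%:R * ln (2 * nR%:R / Delta) <= N%:R ->
   1 - Delta <= iid_prob N rho (fun s =>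
     (if gammaf (4 * k%:R) (@rhohat R _ _ s) == 0 then 0 else
      Cconst R / 2
       * (1 + (1 - gammaf (4 * k%:R) (@rhohat R _ _ s)) / gammaf (4 * k%:R) (@rhohat R _ _ s)
                * Cbar R)^-1
       * (1 - tauf k (@rhohat R _ _ s)))
     <= 1 - tauf k rho)).
Proof.
move=> nR_ge2 rho_gt0 rho_sum1 k_gt0 Delta_itv; split.
  exact: transfer_bound_le_tauf_rhohat_whp.
exact: transfer_bound_rhohat_le_tauf_whp.
Qed.
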